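(* Let $\Delta>\delta\geq 0$ be integers and let $\delta^*$ be a maximizer of $\frac{\Delta(\Delta-i)i}{\Delta+i}$ over $i\in\{\delta,\delta+1,\ldots,\Delta\}$. Let $G$ be a graph with $n$ vertices, maximum degree at most $\Delta$, and minimum degree at least $\delta$. Then $$irr(G)\leq \frac{\Delta(\Delta-\delta^* )\delta^*}{\Delta+\delta^*}\,n.$$
   Context: All graphs are finite, simple and undirected. For a graph $G$ with edge set $E(G)$ and vertex degrees $d_G(u)$, the irregularity (in the sense of Albertson) is $irr(G)=\sum_{uv\in E(G)}|d_G(u)-d_G(v)|$. *)

From mathcomp Require Import all_boot all_order all_algebra.
Set Implicit Arguments. Unset Strict Implicit. Unset Printing Implicit Defensive.
Import Order.TTheory GRing.Theory Num.Theory.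
Local Open Scope ring_scope.

Definition simple_graph (T : finType) (e : rel T) : Prop :=
  symmetric e /\ irreflexive e.

Definition deg (T : finType) (e : rel T) (u : T) : nat := #|[set v | e u v]|.

(* Albertson irregularity: sum over edges uv (each unordered edge counted once,
   via the order u before v in the enumeration of T) of |d(u) - d(v)|. *)
Definition irr (T : finType) (e : rel T) : rat :=
  \sum_(u : T) \sum_(v : T | e u v && (enum_rank u < enum_rank v)%N)
     `| (deg e u)%:R - (deg e v)%:R | .

Definition irrf (Delta i : nat) : rat :=
  (Delta%:R * (Delta%:R - i%:R) * i%:R) / (Delta%:R + i%:R).

From mathcomp Require Import all_boot all_order all_algebra.
From mathcomp Require Import ring lra.
Import Order.TTheory GRing.Theory Num.Theory.
Local Open Scope ring_scope.

(* Write d(u) for the degree of u.  For an edge uv split the contribution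
   |d(u) - d(v)| into two shares,
     share(d(u), d(v)) + share(d(v), d(u)),   share(a, b) = |a - b| b / (a + b),
   and charge share(d(u), d(v)) to the endpoint u.  Then irr(G) is the sum over
   all vertices u of the shares of u towards its d(u) neighbours.
   A short polynomial inequality shows that a * share(a, b) is at most
   f(min(a, b)) <= f(dstar), where f(i) = Delta (Delta - i) i / (Delta + i);
   hence each vertex collects at most f(dstar) in total, and summing over the
   n vertices gives the bound. *)

Section RealFacts.
Context {R : realFieldType}.

(* The part of |a - b| charged to the endpoint of degree a. *)
Definition share (a b : R) : R := `|a - b| * b / (a + b).

Lemma share_split (a b : R) : 0 <= a -> 0 <= b -> `|a - b| = share a b + share b a.
Proof.
move=> a0 b0; rewrite /share (distrC b) [b + a]addrC -mulrDl -mulrDr [b + a]addrC.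
have [ab0|ab_neq0] := eqVneq (a + b) 0; last by rewrite mulfK.
have [-> ->] : a = 0 /\ b = 0 by split; lra.
by rewrite subrr normr0 !mul0r.
Qed.

Lemma share_le_small (a b D : R) : 0 <= a -> a <= b -> b <= D -> 0 < a + b ->
  a * share a b <= D * (D - a) * a / (D + a).
Proof.
move=> a0 ab bD ab0; have Da0 : 0 < D + a by lra.
rewrite /share distrC ger0_norm ?subr_ge0 //.
rewrite mulrA ler_pdivrMr // mulrAC ler_pdivlMr //.
have : 0 <= (D - b) * ((a + b) * D + a * (b - a)) by apply: mulr_ge0; nra.
nra.
Qed.

Lemma share_le_large (a b D : R) : 0 <= b -> b <= a -> a <= D -> 0 < a + b ->
  a * share a b <= D * (D - b) * b / (D + b).
Proof.
move=> b0 ba aD ab0; have Db0 : 0 < D + b by lra.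
rewrite /share ger0_norm ?subr_ge0 //.
rewrite mulrA ler_pdivrMr // mulrAC ler_pdivlMr //.
have : 0 <= b * (D - a) * (a - b) by apply: mulr_ge0; [apply: mulr_ge0|]; lra.
have : 0 <= b * b * (D - a) by apply: mulr_ge0; [apply: mulr_ge0|]; lra.
nra.
Qed.

End RealFacts.

Lemma share_le_irrf {Delta a b : nat} : (0 < a)%N -> (a <= Delta)%N -> (b <= Delta)%N ->
  a%:R * share a%:R b%:R <= irrf Delta (minn a b).
Proof.
move=> a_gt0 aD bD.
have ab0 : 0 < a%:R + b%:R :> rat by rewrite -natrD ltr0n addn_gt0 a_gt0.
rewrite /irrf; case: leqP => [ab|ba].
  by apply: share_le_small; rewrite ?ler_nat.
by apply: share_le_large; rewrite ?ler_nat ?(ltnW ba).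
Qed.

Lemma sum_edges_split (V : nmodType) (T : finType) (e : rel T) (g : T -> T -> V) :
  simple_graph e ->
  \sum_(u : T) \sum_(v : T | e u v && (enum_rank u < enum_rank v)%N) (g u v + g v u)
  = \sum_(u : T) \sum_(v : T | e u v) g u v.
Proof.
move=> [esym eirr].
have below_above u : \sum_(v | e u v) g u v =
    \sum_(v | e u v && (enum_rank u < enum_rank v)%N) g u v
  + \sum_(v | e u v && (enum_rank v < enum_rank u)%N) g u v.
  rewrite (bigID (fun v => (enum_rank u < enum_rank v)%N)) /=; congr (_ + _).
  apply: eq_bigl => v; case euv: (e u v) => //=.
  have vu : enum_rank v != enum_rank u.
    by rewrite (inj_eq enum_rank_inj); apply: contraTneq euv => ->; rewrite eirr.
  by rewrite -leqNgt ltn_neqAle vu.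
under eq_bigr do rewrite big_split.
rewrite big_split (eq_bigr _ (fun u _ => below_above u)) big_split /=; congr (_ + _).
under eq_bigr do rewrite big_mkcond.
rewrite exchange_big; apply: eq_bigr => v _; rewrite [RHS]big_mkcond.
by apply: eq_bigr => u _; rewrite esym.
Qed.

Lemma sum_le_of_card_mul_le (R : numFieldType) (T : finType) (A : {set T})
    (F : T -> R) (M : R) :
  0 <= M -> (forall v, v \in A -> #|A|%:R * F v <= M) -> \sum_(v in A) F v <= M.
Proof.
move=> M0 hF; have [A0|A_gt0] := posnP #|A|.
  by rewrite big_pred0 // => v; apply/negbTE/negP => vA; rewrite (card0_eq A0) in vA.
have kpos : 0 < #|A|%:R :> R by rewrite ltr0n.
apply: le_trans (_ : \sum_(v in A) M / #|A|%:R <= _).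
  by apply: ler_sum => v vA; rewrite ler_pdivlMr // mulrC hF.
by rewrite sumr_const -[_ *+ _]mulr_natr divfK // gt_eqF.
Qed.

Lemma irr_as_shares (T : finType) (e : rel T) : simple_graph e ->
  irr e = \sum_(u : T) \sum_(v : T | e u v) share (deg e u)%:R (deg e v)%:R.
Proof.
move=> ge; rewrite -sum_edges_split //; apply: eq_bigr => u _; apply: eq_bigr => v _.
by rewrite share_split.
Qed.

Lemma vertex_charge_le (Delta : nat) (T : finType) (e : rel T) (M : rat) (u : T) :
  0 <= M -> (forall u, (deg e u <= Delta)%N) ->
  (forall v, e u v -> irrf Delta (minn (deg e u) (deg e v)) <= M) ->
  \sum_(v | e u v) share (deg e u)%:R (deg e v)%:R <= M.
Proof.
move=> M0 hD hM.
rewrite (eq_bigl (mem [set v | e u v])); last by move=> v; rewrite !inE.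
apply: sum_le_of_card_mul_le => // v; rewrite inE => euv.
have deg_gt0 : (0 < deg e u)%N by apply/card_gt0P; exists v; rewrite inE.
apply: le_trans (hM v euv); exact: share_le_irrf deg_gt0 (hD u) (hD v).
Qed.

Theorem proposition1 (Delta delta dstar : nat) (T : finType) (e : rel T) :
  (delta < Delta)%N ->
  (delta <= dstar <= Delta)%N ->
  (forall i : nat, (delta <= i <= Delta)%N -> irrf Delta i <= irrf Delta dstar) ->
  simple_graph e ->
  (forall u : T, (deg e u <= Delta)%N) ->
  (forall u : T, (delta <= deg e u)%N) ->
  irr e <= irrf Delta dstar * (#|T|)%:R.
Proof.
move=> hdD _ hmax ge hDu hdu.
(* f(dstar) >= f(Delta) = 0, which covers isolated vertices. *)
have M0 : 0 <= irrf Delta dstar.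
  have <- : irrf Delta Delta = 0 by rewrite /irrf subrr mulr0 !mul0r.
  by apply: hmax; rewrite (ltnW hdD) leqnn.
have hM u v : irrf Delta (minn (deg e u) (deg e v)) <= irrf Delta dstar.
  by apply: hmax; rewrite leq_min !hdu geq_min hDu.
rewrite irr_as_shares //.
apply: le_trans (_ : \sum_(u : T) irrf Delta dstar <= _); last by rewrite sumr_const mulr_natr.
by apply: ler_sum => u _; apply: vertex_charge_le => // v _; apply: hM.
Qed.
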